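(* Let $(G_n)$ be a sequence of graphs, $G_n$ having vertex set $V$ with $|V|=n$, average degree $d$, minimum degree $\delta$, maximum degree $\Delta$, and let $\lambda=\lambda(n)$ satisfy $|\lambda_i|\le\lambda$ for all adjacency eigenvalues $\lambda_i$, $i\ge2$. Suppose $\Delta-\delta\le R\lambda$ for a constant $R>0$ and $\lambda/d\to0$. Then for all sufficiently large $n$, for all $U,W\subseteq V$, $$\left|e(U,W)-\frac{d}{n}|U||W|\right|\le\overline\lambda\sqrt{|U||W|},\qquad\text{where }\overline\lambda=(10R+1)\lambda.$$
   Context: Adjacency eigenvalues are ordered $\lambda_1\ge\dots\ge\lambda_n$. For $U,W\subseteq V$, $e(U,W)$ is the number of ordered pairs $(u,w)$ with $u\in U$, $w\in W$ and $u$ adjacent to $w$. *)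

From HB Require Import structures.
From mathcomp Require Import all_boot all_order all_algebra.
From mathcomp Require Import all_classical all_reals all_analysis.
Set Implicit Arguments. Unset Strict Implicit. Unset Printing Implicit Defensive.
Import Order.TTheory GRing.Theory Num.Theory.
Local Open Scope ring_scope.

Definition simple_graph (n : nat) (g : rel 'I_n) : Prop :=
  symmetric g /\ irreflexive g.

Definition deg (n : nat) (g : rel 'I_n) (v : 'I_n) : nat := #|[set w | g v w]|.

Definition maxdeg (n : nat) (g : rel 'I_n) : nat := (\max_(v : 'I_n) deg g v)%N.
(* deg v <= n, so n is a neutral element for the min over the vertices *)
Definition mindeg (n : nat) (g : rel 'I_n) : nat := (\big[minn/n]_(v : 'I_n) deg g v)%N.

Definition avgdeg (R : realType) (n : nat) (g : rel 'I_n) : R :=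
  (\sum_(v : 'I_n) deg g v)%:R / n%:R.

Definition adjmx (R : realType) (n : nat) (g : rel 'I_n) : 'M[R]_n :=
  \matrix_(i, j) (g i j)%:R.

(* s is the list of adjacency eigenvalues (with multiplicity) in
   nonincreasing order: lambda_1 = s`_0 >= ... >= lambda_n = s`_(n-1). *)
Definition adj_spectrum (R : realType) (n : nat) (g : rel 'I_n) (s : seq R) : Prop :=
  sorted (>=%R) s /\ char_poly (adjmx R g) = \prod_(x <- s) ('X - x%:P).

(* e(U,W): ordered pairs (u,w), u in U, w in W, u adjacent to w. *)
Definition edges_between (n : nat) (g : rel 'I_n) (U W : {set 'I_n}) : nat :=
  #|[set p : 'I_n * 'I_n | [&& p.1 \in U, p.2 \in W & g p.1 p.2]]|.

From HB Require Import structures.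
From mathcomp Require Import all_boot all_order all_algebra.
From mathcomp Require Import all_classical all_reals all_analysis.
From mathcomp Require Import complex ring lra.
Set Implicit Arguments. Unset Strict Implicit. Unset Printing Implicit Defensive.
Import Order.TTheory GRing.Theory Num.Theory.
Import numFieldNormedType.Exports Normc.
Local Open Scope classical_set_scope.
Local Open Scope ring_scope.

(* Expand the indicator vectors of U and W and the all-ones vector 1 in an
   orthonormal eigenbasis of the adjacency matrix A (obtained over R[i] from
   the Hermitian spectral theorem); all eigenvalues but one, mu_k0, are at most
   lam in absolute value.  As the degrees stay within R*lam of d, the vector
   A1 - d1 is short: so 1 lies almost entirely along the k0-th eigenvector and
   |mu_k0 - d| <= 2R*lam.  In e(U,W) - (d/n)|U||W| = <1_U, A 1_W> - (d/n)
   <1_U, 1> <1, 1_W>, the coordinates off k0 then contribute at most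
   lam sqrt(|U||W|) by Cauchy-Schwarz, and the rest at most 8R*lam sqrt(|U||W|). *)

Local Notation "x %:C" := (real_complex _ x).

Section ComplexNorm.
Variable R : rcfType.
Local Notation C := R[i].
Implicit Types (x : R) (z : C).

Lemma real_complex_real x : x%:C \is Num.real.
Proof. by apply/complex_realP; exists x. Qed.

Lemma conj_real_complex x : x%:C^* = x%:C.
Proof. exact/conj_Creal/real_complex_real. Qed.

Lemma norm_complex z : `|z| = (normc z)%:C.
Proof. by case: z. Qed.

Lemma normc_ge0 z : 0 <= normc z.
Proof. by case: z => a b; apply: sqrtr_ge0. Qed.

Lemma normc_real_complex x : normc x%:C = `|x|.
Proof. by rewrite /normc /= expr0n addr0 sqrtr_sqr. Qed.

Lemma norm_real_complex x : `|x%:C| = `|x|%:C.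
Proof. by rewrite norm_complex normc_real_complex. Qed.

Lemma sqr_normc z : (normc z ^+ 2)%:C = z * z^*.
Proof. by rewrite -normCK norm_complex rmorphXn. Qed.

Lemma normc_le z x : `|z| <= x%:C -> normc z <= x.
Proof. by rewrite norm_complex lecR. Qed.

Lemma normc_sum_le (I : finType) (P : pred I) (F : I -> C) (B : I -> R) :
  (forall i, P i -> `|F i| <= (B i)%:C) ->
  normc (\sum_(i | P i) F i) <= \sum_(i | P i) B i.
Proof.
move=> FB; apply: normc_le; rewrite rmorph_sum.
by apply: le_trans (ler_norm_sum _ _ _) (ler_sum _ FB).
Qed.

End ComplexNorm.

Lemma char_poly_similar (R : comUnitRingType) n (P B : 'M[R]_n) :
  P \in unitmx -> char_poly (invmx P *m B *m P) = char_poly B.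
Proof.
move=> Pu; rewrite /char_poly /char_poly_mx.
set Q := map_mx polyC P; set Q' := map_mx polyC (invmx P).
have Q'Q : Q' *m Q = 1%:M by rewrite -map_mxM mulVmx // map_mx1.
have -> : 'X%:M - map_mx polyC (invmx P *m B *m P)
          = Q' *m ('X%:M - map_mx polyC B) *m Q.
  rewrite !map_mxM mulmxBr mulmxBl -!mulmxA; congr (_ - _).
  by rewrite mul_scalar_mx -scalemxAr Q'Q scalemx1.
by rewrite !det_mulmx mulrC mulrA -det_mulmx mulmx1C // det1 mul1r.
Qed.

Lemma real_symmetric_spectral (R : rcfType) n (A : 'M[R]_n) : A^T = A ->
  exists (P : 'M[R[i]]_n) (mu : 'I_n -> R),
    [/\ forall i j, \sum_k (P k i)^* * P k j = (i == j)%:R,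
        forall i j, (A i j)%:C = \sum_k (P k i)^* * (mu k)%:C * P k j,
        forall k j, \sum_i P k i * (A i j)%:C = (mu k)%:C * P k j &
        char_poly A = \prod_(k < n) ('X - (mu k)%:P)].
Proof.
move=> Asym; set Ac := map_mx (real_complex R) A.
have Ah : Ac \is hermsymmx.
  apply: realsym_hermsym; last by apply/mxOverP => i j; rewrite mxE real_complex_real.
  rewrite is_hermitianmxE expr0 scale1r; apply/eqP/matrixP => i j.
  by rewrite !mxE -[in RHS]Asym mxE.
have /orthomx_spectralP AE := hermitian_normalmx Ah.
have Dr := hermitian_spectral_diag_real Ah.
set P := spectralmx Ac in AE; set D := spectral_diag Ac in AE Dr.
have Pu : P \is unitarymx by apply: spectral_unitarymx.
have PP : invmx P *m P = 1%:M by rewrite mulVmx ?unitarymx_unit.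
rewrite (invmx_unitary Pu) in AE PP.
pose mu k := complex.Re (D 0 k).
have Dmu k : D 0 k = (mu k)%:C.
  by rewrite /mu RRe_real //; move/mxOverP: Dr => /(_ 0 k).
exists P, mu; split.
- move=> i j; move/matrixP: PP => /(_ i j); rewrite !mxE => <-.
  by apply: eq_bigr => k _; rewrite !mxE.
- move=> i j; move/matrixP: AE => /(_ i j); rewrite /Ac !mxE => ->.
  apply: eq_bigr => k _; rewrite !mxE; congr (_ * _).
  rewrite (bigD1 k) //= big1 ?addr0 => [|l lk]; last first.
    by rewrite !mxE (negPf lk) mulr0n mulr0.
  by rewrite !mxE eqxx mulr1n Dmu.
- move=> k j.
  have PA : P *m Ac = diag_mx D *m P.
    by rewrite AE !mulmxA (unitarymxP Pu) mul1mx.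
  move/matrixP: PA => /(_ k j); rewrite !mxE => PA.
  rewrite (eq_bigr (fun i => P k i * Ac i j)) => [|i _]; last by rewrite mxE.
  rewrite PA (bigD1 k) //= big1 ?addr0 => [|l lk]; last first.
    by rewrite !mxE eq_sym (negPf lk) mulr0n mul0r.
  by rewrite !mxE eqxx mulr1n Dmu.
- apply: (map_poly_inj (real_complex R)).
  rewrite map_char_poly -/Ac {1}AE -(invmx_unitary Pu) char_poly_similar ?unitarymx_unit //.
  rewrite char_poly_trig ?diag_mx_is_trig // rmorph_prod; apply: eq_bigr => k _.
  by rewrite rmorphB /= map_polyX map_polyC !mxE eqxx mulr1n Dmu.
Qed.

Section EigenCoordinates.
Variables (R : rcfType) (n : nat) (P : 'M[R[i]]_n).

Definition ecoord (f : 'I_n -> R) k := \sum_i (f i)%:C * (P k i)^*.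

Lemma ecoord_conj f k : (ecoord f k)^* = \sum_i (f i)%:C * P k i.
Proof.
rewrite rmorph_sum; apply: eq_bigr => i _.
by rewrite rmorphM /= conj_real_complex conjCK.
Qed.

Lemma ecoordB (f h : 'I_n -> R) (t : R) k :
  ecoord (fun i => f i - t * h i) k = ecoord f k - t%:C * ecoord h k.
Proof.
rewrite /ecoord mulr_sumr -sumrB; apply: eq_bigr => i _.
by rewrite rmorphB rmorphM /=; ring.
Qed.

Lemma weighted_ecoord_dot (w : 'I_n -> R[i]) (f h : 'I_n -> R) :
  \sum_k w k * ecoord f k * (ecoord h k)^* =
  \sum_i \sum_j (f i)%:C * (\sum_k (P k i)^* * w k * P k j) * (h j)%:C.
Proof.
have expand k : w k * ecoord f k * (ecoord h k)^* =
    \sum_i \sum_j (f i)%:C * ((P k i)^* * w k * P k j) * (h j)%:C.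
  rewrite ecoord_conj -mulrA big_distrl big_distrr /=; apply: eq_bigr => i _.
  rewrite !big_distrr /=; apply: eq_bigr => j _; ring.
under eq_bigr do rewrite expand.
rewrite exchange_big; apply: eq_bigr => i _.
rewrite exchange_big; apply: eq_bigr => j _.
by rewrite big_distrr big_distrl.
Qed.

Variables (A : 'M[R]_n) (mu : 'I_n -> R).
Hypothesis P_orthonormal : forall i j, \sum_k (P k i)^* * P k j = (i == j)%:R.
Hypothesis A_spectral : forall i j, (A i j)%:C = \sum_k (P k i)^* * (mu k)%:C * P k j.
Hypothesis P_eigen : forall k j, \sum_i P k i * (A i j)%:C = (mu k)%:C * P k j.

Lemma ecoord_dot (f h : 'I_n -> R) :
  \sum_k ecoord f k * (ecoord h k)^* = (\sum_i f i * h i)%:C.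
Proof.
have orth1 i j : \sum_k (P k i)^* * 1 * P k j = (i == j)%:R.
  by under eq_bigr do rewrite mulr1; apply: P_orthonormal.
have := weighted_ecoord_dot (fun _ => 1) f h; under eq_bigr do rewrite mul1r.
move=> ->; rewrite rmorph_sum; apply: eq_bigr => i _.
under eq_bigr do rewrite orth1.
rewrite (bigD1 i) //= big1 ?addr0 => [|j ji]; last by rewrite eq_sym (negPf ji) mulr0 mul0r.
by rewrite eqxx mulr1 rmorphM.
Qed.

Lemma ecoord_form (f h : 'I_n -> R) :
  \sum_k (mu k)%:C * ecoord f k * (ecoord h k)^* =
  (\sum_i \sum_j f i * A i j * h j)%:C.
Proof.
rewrite weighted_ecoord_dot rmorph_sum; apply: eq_bigr => i _.
rewrite rmorph_sum; apply: eq_bigr => j _.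
by rewrite -A_spectral !rmorphM.
Qed.

Lemma sum_sqr_normc_ecoord f : \sum_k normc (ecoord f k) ^+ 2 = \sum_i f i ^+ 2.
Proof.
apply: complexI; rewrite rmorph_sum /=.
under eq_bigr do rewrite sqr_normc.
by rewrite ecoord_dot; congr (_ %:C); apply: eq_bigr => i _; rewrite expr2.
Qed.

Lemma ecoord_mul f k :
  ecoord (fun i => \sum_j A i j * f j) k = (mu k)%:C * ecoord f k.
Proof.
have eigenJ j : \sum_i (P k i)^* * (A i j)%:C = (mu k)%:C * (P k j)^*.
  have := congr1 Num.conj (P_eigen k j).
  rewrite rmorph_sum rmorphM /= conj_real_complex => <-.
  by apply: eq_bigr => i _; rewrite rmorphM /= conj_real_complex.
rewrite /ecoord mulr_sumr.
under eq_bigr do rewrite rmorph_sum big_distrl /=.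
rewrite exchange_big; apply: eq_bigr => j _.
rewrite mulrCA -eigenJ mulr_sumr; apply: eq_bigr => i _.
by rewrite rmorphM /=; ring.
Qed.

Lemma sum_sqr_ecoord_shift f t :
  \sum_k (mu k - t) ^+ 2 * normc (ecoord f k) ^+ 2
  = \sum_i (\sum_j A i j * f j - t * f i) ^+ 2.
Proof.
rewrite -sum_sqr_normc_ecoord; apply: eq_bigr => k _.
rewrite ecoordB ecoord_mul -mulrBl -rmorphB normcM normc_real_complex.
by rewrite exprMn real_normK ?num_real.
Qed.

End EigenCoordinates.

Lemma ler_norm_split (V : numDomainType) (t m x y u v w q s : V) :
  `|t + m * x * y - w * (x * u * s + q * v * y + q * s)|
  <= `|t| + `|m| * `|x| * `|y|
     + `|w| * (`|x| * `|u| * `|s| + `|q| * `|v| * `|y| + `|q| * `|s|).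
Proof.
apply: le_trans (ler_normB _ _) _; rewrite normrM lerD ?ler_wpM2l //.
  by apply: le_trans (ler_normD _ _) _; rewrite !normrM.
apply: le_trans (ler_normD _ _) _; rewrite !normrM lerD //.
by apply: le_trans (ler_normD _ _) _; rewrite !normrM.
Qed.

(* Isolate the [k0]-th coordinate; [D] will be [d / n]. *)
Lemma normc_discrepancy_split_le (R : rcfType) n (k0 : 'I_n) (mu : 'I_n -> R)
    (lam D : R) (a b c : 'I_n -> R[i]) :
  (forall k, k != k0 -> `|mu k| <= lam) -> 0 <= D ->
  normc (\sum_k (mu k)%:C * a k * (b k)^*
         - D%:C * (\sum_k a k * (c k)^*) * (\sum_k c k * (b k)^*))
  <= lam * (\sum_(k | k != k0) normc (a k) * normc (b k))
     + `|mu k0 - D * normc (c k0) ^+ 2| * normc (a k0) * normc (b k0)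
     + D * (normc (a k0) * normc (c k0) * (\sum_(k | k != k0) normc (b k) * normc (c k))
        + (\sum_(k | k != k0) normc (a k) * normc (c k)) * normc (c k0) * normc (b k0)
        + (\sum_(k | k != k0) normc (a k) * normc (c k))
          * (\sum_(k | k != k0) normc (b k) * normc (c k))).
Proof.
move=> mu_small D_ge0.
rewrite (bigD1 k0) //= [\sum_k a k * _](bigD1 k0) //= [\sum_k c k * _](bigD1 k0) //=.
set T := \sum_(k | k != k0) _; set Q := \sum_(k | k != k0) a k * _.
set S := \sum_(k | k != k0) c k * _; set m := mu k0 - D * normc (c k0) ^+ 2.
have -> : (mu k0)%:C * a k0 * (b k0)^* + T
          - D%:C * (a k0 * (c k0)^* + Q) * (c k0 * (b k0)^* + S)
        = T + m%:C * a k0 * (b k0)^*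
          - D%:C * (a k0 * (c k0)^* * S + Q * c k0 * (b k0)^* + Q * S).
  by rewrite rmorphB rmorphM /= sqr_normc; ring.
have T_le : normc T <= lam * (\sum_(k | k != k0) normc (a k) * normc (b k)).
  rewrite mulr_sumr; apply: normc_sum_le => k kk0.
  rewrite !normrM norm_conjC norm_real_complex !norm_complex -!rmorphM lecR.
  by rewrite -mulrA ler_wpM2r ?mulr_ge0 ?normc_ge0 ?mu_small.
have Q_le : normc Q <= \sum_(k | k != k0) normc (a k) * normc (c k).
  by apply: normc_sum_le => k _; rewrite !normrM norm_conjC !norm_complex -!rmorphM.
have S_le : normc S <= \sum_(k | k != k0) normc (b k) * normc (c k).
  apply: normc_sum_le => k _.
  by rewrite !normrM norm_conjC !norm_complex -!rmorphM mulrC.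
have triangle := ler_norm_split T m%:C (a k0) (b k0)^* (c k0)^* (c k0) D%:C Q S.
rewrite !norm_conjC !norm_real_complex (ger0_norm D_ge0) !norm_complex in triangle.
rewrite -!rmorphM -!rmorphD -rmorphM -rmorphD lecR in triangle.
apply: le_trans triangle _.
rewrite lerD ?lerD // ler_wpM2l //.
by rewrite !lerD ?ler_pM ?mulr_ge0 ?normc_ge0.
Qed.

Lemma bigD1_le (V : numDomainType) (I : finType) (i : I) (F : I -> V) :
  (forall j, 0 <= F j) -> F i <= \sum_j F j /\ \sum_(j | j != i) F j <= \sum_j F j.
Proof. by move=> F0; rewrite (bigD1 i) //= lerDl lerDr sumr_ge0. Qed.

Section RealEstimates.
Variable R : realFieldType.

Lemma ler_of_sqr (u v : R) : 0 <= v -> u ^+ 2 <= v ^+ 2 -> u <= v.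
Proof. by move=> v0 h; nra. Qed.

Lemma sum_mul_sqr_le (I : finType) (P : pred I) (u v : I -> R) :
  (\sum_(i | P i) u i * v i) ^+ 2 <=
  (\sum_(i | P i) u i ^+ 2) * (\sum_(i | P i) v i ^+ 2).
Proof.
pose S F := \sum_(i | P i) \sum_(j | P j) (F i j : R).
have sq_ge0 : 0 <= S (fun i j => (u i * v j - u j * v i) ^+ 2).
  by apply: sumr_ge0 => i _; apply: sumr_ge0 => j _; apply: sqr_ge0.
have uv : (\sum_(i | P i) u i ^+ 2) * (\sum_(i | P i) v i ^+ 2)
          = S (fun i j => u i ^+ 2 * v j ^+ 2).
  by rewrite big_distrl; apply: eq_bigr => i _; rewrite big_distrr.
have vu : S (fun i j => u j ^+ 2 * v i ^+ 2) = S (fun i j => u i ^+ 2 * v j ^+ 2).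
  by rewrite /S exchange_big.
have uvuv : (\sum_(i | P i) u i * v i) ^+ 2 = S (fun i j => u i * v i * (u j * v j)).
  by rewrite expr2 big_distrl; apply: eq_bigr => i _; rewrite big_distrr.
have expand : S (fun i j => (u i * v j - u j * v i) ^+ 2) =
    S (fun i j => u i ^+ 2 * v j ^+ 2) + S (fun i j => u j ^+ 2 * v i ^+ 2)
    - 2 * S (fun i j => u i * v i * (u j * v j)).
  rewrite /S -big_split /= mulr_sumr -sumrB; apply: eq_bigr => i _.
  rewrite -big_split /= mulr_sumr -sumrB; apply: eq_bigr => j _; ring.
rewrite uv uvuv; move: sq_ge0; rewrite expand vu; lra.
Qed.

(* [N] is the number of vertices, [g0 ^+ 2] and [G] the mass of the all-ones
   vector on the top eigenvector and on the others, [mu0] the top eigenvalue. *)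
Variables (lam Rc d N g0 G mu0 : R).
Hypotheses (lam_ge0 : 0 <= lam) (Rc_gt0 : 0 < Rc) (d_gt0 : 0 < d) (N_gt0 : 0 < N).
Hypotheses (d_ge_lam : 2 * lam <= d) (d_ge_Rclam : 4 * Rc * lam <= d).
Hypotheses (g0_ge0 : 0 <= g0) (G_ge0 : 0 <= G) (mass : g0 ^+ 2 + G = N).
Hypothesis spread :
  (mu0 - d) ^+ 2 * g0 ^+ 2 + (d - lam) ^+ 2 * G <= N * (Rc * lam) ^+ 2.

Lemma tail_mass_le : d ^+ 2 * G <= 4 * N * (Rc * lam) ^+ 2.
Proof.
have half_le : d ^+ 2 <= 4 * (d - lam) ^+ 2.
  have : 0 <= d <= 2 * (d - lam) by apply/andP; split; move: d_gt0 d_ge_lam; lra.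
  by move=> /andP[d0 dl]; have := ler_pM d0 d0 dl dl; lra.
have : (d - lam) ^+ 2 * G <= N * (Rc * lam) ^+ 2.
  have : 0 <= (mu0 - d) ^+ 2 * g0 ^+ 2 by rewrite mulr_ge0 ?sqr_ge0.
  by move: spread; lra.
by have := ler_wpM2r G_ge0 half_le; lra.
Qed.

Lemma tail_mass_le_quarter : 4 * G <= N.
Proof.
have Rl : 16 * (Rc * lam) ^+ 2 <= d ^+ 2.
  have Rl0 : 0 <= 4 * Rc * lam by rewrite !mulr_ge0 ?(ltW Rc_gt0).
  by have := ler_pM Rl0 Rl0 d_ge_Rclam d_ge_Rclam; lra.
rewrite -(ler_pM2l (exprn_gt0 2 d_gt0)).
by have := ler_wpM2l (ltW N_gt0) Rl; have := tail_mass_le; lra.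
Qed.

Lemma top_eigenvalue_near : `|mu0 - d| <= 2 * Rc * lam.
Proof.
apply: ler_of_sqr; first by rewrite !mulr_ge0 ?(ltW Rc_gt0).
rewrite real_normK ?num_real //.
have g0_big : 3 * N <= 4 * g0 ^+ 2 by move: tail_mass_le_quarter mass; lra.
have top : (mu0 - d) ^+ 2 * (4 * g0 ^+ 2) <= 4 * N * (Rc * lam) ^+ 2.
  have : 0 <= (d - lam) ^+ 2 * G by rewrite mulr_ge0 ?sqr_ge0.
  by move: spread; lra.
rewrite -(ler_pM2r N_gt0); have := ler_wpM2l (sqr_ge0 (mu0 - d)) g0_big.
have : 0 <= N * (Rc * lam) ^+ 2 by rewrite mulr_ge0 ?sqr_ge0 ?(ltW N_gt0).
lra.
Qed.

Lemma tail_weight_le : d * G / N <= Rc * lam.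
Proof.
rewrite ler_pdivrMr // -(ler_pM2l d_gt0).
have Rl0 : 0 <= N * (Rc * lam) by rewrite !mulr_ge0 ?(ltW N_gt0) ?(ltW Rc_gt0).
have := ler_wpM2l Rl0 d_ge_Rclam; have := tail_mass_le; lra.
Qed.

Lemma top_coefficient_le : `|mu0 - d / N * g0 ^+ 2| <= 3 * Rc * lam.
Proof.
have -> : mu0 - d / N * g0 ^+ 2 = (mu0 - d) + d * G / N.
  by rewrite -mass; field; rewrite mass gt_eqF.
apply: le_trans (ler_normD _ _) _.
rewrite [`|d * G / N|]ger0_norm ?divr_ge0 ?mulr_ge0 ?(ltW d_gt0) ?(ltW N_gt0) //.
by have := top_eigenvalue_near; have := tail_weight_le; lra.
Qed.

Lemma cross_term_le (X q : R) :
  0 <= X -> 0 <= q -> q ^+ 2 <= X ^+ 2 * G -> d / N * (g0 * q) <= 2 * Rc * lam * X.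
Proof.
move=> X0 q0 qG; apply: ler_of_sqr; first by rewrite !mulr_ge0 ?(ltW Rc_gt0).
have g0N : g0 ^+ 2 <= N by move: mass G_ge0; lra.
have gq : (g0 * q) ^+ 2 <= N * (X ^+ 2 * G) by rewrite exprMn ler_pM ?sqr_ge0.
have dG : d ^+ 2 * (X ^+ 2 * G) <= X ^+ 2 * (4 * N * (Rc * lam) ^+ 2).
  by rewrite mulrCA ler_wpM2l ?sqr_ge0 ?tail_mass_le.
have -> : (d / N * (g0 * q)) ^+ 2 = d ^+ 2 * (g0 * q) ^+ 2 / N ^+ 2.
  by field; rewrite gt_eqF.
rewrite ler_pdivrMr ?exprn_gt0 //.
have := ler_wpM2l (sqr_ge0 d) gq; have := ler_wpM2l (ltW N_gt0) dG; lra.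
Qed.

Lemma discrepancy_terms_le (X Y a0 b0 p q r : R) :
  0 <= X -> 0 <= Y -> 0 <= a0 <= X -> 0 <= b0 <= Y -> p <= X * Y ->
  0 <= q -> 0 <= r -> q ^+ 2 <= X ^+ 2 * G -> r ^+ 2 <= Y ^+ 2 * G ->
  lam * p + `|mu0 - d / N * g0 ^+ 2| * a0 * b0
    + d / N * (a0 * g0 * r + q * g0 * b0 + q * r)
  <= (10 * Rc + 1) * lam * X * Y.
Proof.
move=> X0 Y0 /andP[a00 a0X] /andP[b00 b0Y] pXY q0 r0 qG rG.
have T1 : lam * p <= lam * (X * Y) by rewrite ler_wpM2l.
have T2 : `|mu0 - d / N * g0 ^+ 2| * a0 * b0 <= 3 * Rc * lam * X * Y.
  apply: ler_pM => //; first by rewrite mulr_ge0.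
  by apply: ler_pM => //; apply: top_coefficient_le.
have T3 := cross_term_le X0 q0 qG.
have T4 := cross_term_le Y0 r0 rG.
have T5 : d / N * (q * r) <= Rc * lam * X * Y.
  have qr : q * r <= X * Y * G.
    apply: ler_of_sqr; first by rewrite !mulr_ge0.
    have -> : (X * Y * G) ^+ 2 = (X ^+ 2 * G) * (Y ^+ 2 * G) by ring.
    by rewrite exprMn ler_pM ?sqr_ge0.
  have := ler_wpM2l (mulr_ge0 X0 Y0) tail_weight_le.
  have : d / N * (q * r) <= d / N * (X * Y * G).
    by rewrite ler_wpM2l ?divr_ge0 ?(ltW d_gt0) ?(ltW N_gt0).
  have -> : d / N * (X * Y * G) = X * Y * (d * G / N) by ring.
  lra.
have T3' := ler_wpM2l b00 T3; have T4' := ler_wpM2l a00 T4.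
have Rl0 : 0 <= Rc * lam * X * Y by rewrite !mulr_ge0 ?(ltW Rc_gt0).
have -> : d / N * (a0 * g0 * r + q * g0 * b0 + q * r) =
  a0 * (d / N * (g0 * r)) + b0 * (d / N * (g0 * q)) + d / N * (q * r) by ring.
have : a0 * (2 * Rc * lam * Y) <= X * (2 * Rc * lam * Y).
  by rewrite ler_wpM2r ?mulr_ge0 ?(ltW Rc_gt0).
have : b0 * (2 * Rc * lam * X) <= Y * (2 * Rc * lam * X).
  by rewrite ler_wpM2r ?mulr_ge0 ?(ltW Rc_gt0).
lra.
Qed.

End RealEstimates.

Section CoordinateDiscrepancy.
Variables (R : rcfType) (n : nat) (k0 : 'I_n) (mu : 'I_n -> R) (a b c : 'I_n -> R[i]).

Lemma sqr_sum_normc_off_le (F H : 'I_n -> R[i]) (X : R) :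
  \sum_k normc (F k) ^+ 2 = X ^+ 2 ->
  (\sum_(k | k != k0) normc (F k) * normc (H k)) ^+ 2
  <= X ^+ 2 * \sum_(k | k != k0) normc (H k) ^+ 2.
Proof.
move=> FX; apply: le_trans (sum_mul_sqr_le _ _ _) _.
rewrite ler_wpM2r ?sumr_ge0 // => [k _|]; first exact: sqr_ge0.
by rewrite -FX; apply: (bigD1_le k0 (fun k => sqr_ge0 _)).2.
Qed.

Lemma coordinate_discrepancy_le (lam Rc d X Y : R) :
  0 <= lam -> 0 < Rc -> 0 < d -> 2 * lam <= d -> 4 * Rc * lam <= d ->
  0 <= X -> 0 <= Y -> (forall k, k != k0 -> `|mu k| <= lam) ->
  \sum_k normc (a k) ^+ 2 = X ^+ 2 -> \sum_k normc (b k) ^+ 2 = Y ^+ 2 ->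
  \sum_k normc (c k) ^+ 2 = n%:R ->
  \sum_k (mu k - d) ^+ 2 * normc (c k) ^+ 2 <= n%:R * (Rc * lam) ^+ 2 ->
  normc (\sum_k (mu k)%:C * a k * (b k)^*
         - (d / n%:R)%:C * (\sum_k a k * (c k)^*) * (\sum_k c k * (b k)^*))
  <= (10 * Rc + 1) * lam * X * Y.
Proof.
move=> lam0 Rc0 d0 dlam dRc X0 Y0 mu_small aX bY cN dev.
have n0 : 0 < n%:R :> R by rewrite ltr0n (leq_ltn_trans _ (ltn_ord k0)).
apply: le_trans (normc_discrepancy_split_le _ _ _ mu_small _) _.
  by rewrite divr_ge0 ?ltW.
have sq0 (F : 'I_n -> R[i]) k : 0 <= normc (F k) ^+ 2 by apply: sqr_ge0.
have top_le (F : 'I_n -> R[i]) Z : 0 <= Z -> \sum_k normc (F k) ^+ 2 = Z ^+ 2 ->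
    normc (F k0) <= Z.
  move=> Z0 FZ; apply: ler_of_sqr => //.
  by rewrite -FZ; apply: (bigD1_le k0 (sq0 F)).1.
apply: (discrepancy_terms_le (g0 := normc (c k0))
  (G := \sum_(k | k != k0) normc (c k) ^+ 2)) => //; rewrite ?normc_ge0 ?sumr_ge0 //.
- by rewrite -cN [in RHS](bigD1 k0).
- apply: le_trans dev; rewrite [in X in _ <= X](bigD1 k0) //= lerD2l mulr_sumr.
  apply: ler_sum => k kk0; rewrite ler_wpM2r //.
  have := mu_small k kk0; rewrite ler_norml => /andP[l1 l2].
  have dl : 0 <= d - lam by lra.
  have dm : d - lam <= d - mu k by lra.
  by rewrite -sqrrN opprB; have := ler_pM dl dl dm dm; lra.
- exact: top_le.
- exact: top_le.
- apply: ler_of_sqr; first by rewrite mulr_ge0.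
  apply: le_trans (sum_mul_sqr_le _ _ _) _; rewrite exprMn -aX -bY.
  by rewrite ler_pM ?sumr_ge0 ?(bigD1_le k0 (sq0 _)).2.
- by move=> k _; rewrite mulr_ge0 ?normc_ge0.
- by move=> k _; rewrite mulr_ge0 ?normc_ge0.
- exact: sqr_sum_normc_off_le.
- exact: sqr_sum_normc_off_le.
Qed.

End CoordinateDiscrepancy.

Section GraphCounting.
Variables (R : realType) (n : nat) (g : rel 'I_n).
Local Notation A := (adjmx R g).

Lemma deg_adjmx v : (deg g v)%:R = \sum_j A v j.
Proof.
rewrite /deg -sum1_card natr_sum big_mkcond /=; apply: eq_bigr => j _.
by rewrite inE mxE; case: (g v j).
Qed.

Lemma card_indicator (U : {set 'I_n}) : #|U|%:R = \sum_i (i \in U)%:R :> R.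
Proof.
rewrite -sum1_card natr_sum big_mkcond /=; apply: eq_bigr => i _.
by case: (i \in U).
Qed.

Lemma sum_sqr_indicator (U : {set 'I_n}) : \sum_i ((i \in U)%:R : R) ^+ 2 = #|U|%:R.
Proof.
by rewrite card_indicator; apply: eq_bigr => i _; case: (i \in U); rewrite ?expr0n ?expr1n.
Qed.

Lemma edges_between_adjmx (U W : {set 'I_n}) :
  (edges_between g U W)%:R
  = \sum_i \sum_j (i \in U)%:R * A i j * (j \in W)%:R :> R.
Proof.
rewrite /edges_between -sum1_card natr_sum big_mkcond /= pair_big /=.
apply: eq_bigr => [[i j]] _ /=; rewrite inE mxE /=.
by case: (i \in U); case: (j \in W); case: (g i j); rewrite ?mulr1 ?mul1r ?mulr0 ?mul0r.
Qed.

Lemma edges_between_le_sum_deg (U W : {set 'I_n}) :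
  (edges_between g U W)%:R <= \sum_v (deg g v)%:R :> R.
Proof.
rewrite edges_between_adjmx; apply: ler_sum => i _; rewrite deg_adjmx.
apply: ler_sum => j _; rewrite mxE.
by case: (i \in U); case: (j \in W); rewrite ?mulr1 ?mul1r ?mulr0 ?mul0r ?ler0n.
Qed.

Lemma sum_deg : \sum_v (deg g v)%:R = avgdeg R g * n%:R.
Proof.
have [n0|n_gt0] := posnP n; last by rewrite -natr_sum divfK // pnatr_eq0 -lt0n.
have -> : n%:R = 0 :> R by rewrite n0.
by rewrite mulr0 big1 // => v; have := ltn_ord v; rewrite {2}n0.
Qed.

Lemma mindeg_le v : (mindeg g <= deg g v)%N.
Proof.
rewrite /mindeg; elim: (index_enum _) (mem_index_enum v) => [//|u r IH].
rewrite inE big_cons => /orP[/eqP <-|vr]; first exact: geq_minl.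
exact: leq_trans (geq_minr _ _) (IH vr).
Qed.

Lemma maxdeg_ge v : (deg g v <= maxdeg g)%N.
Proof. exact: leq_bigmax. Qed.

Lemma mindeg_le_maxdeg : (mindeg g <= maxdeg g)%N.
Proof.
have [n0|n_gt0] := posnP n; last first.
  exact: leq_trans (mindeg_le (Ordinal n_gt0)) (maxdeg_ge _).
rewrite /mindeg big_pred0 => [|v]; first by rewrite {1}n0.
by have := ltn_ord v; rewrite {2}n0.
Qed.

Lemma sum_sqr_deg_sub_avgdeg_le :
  \sum_v ((deg g v)%:R - avgdeg R g) ^+ 2
  <= n%:R * ((maxdeg g)%:R - (mindeg g)%:R) ^+ 2.
Proof.
have [n0|n_gt0] := posnP n.
  by rewrite big1 1?mulr_ge0 ?sqr_ge0 // => v; have := ltn_ord v; rewrite {2}n0.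
have n_gt0R : 0 < n%:R :> R by rewrite ltr0n.
set d := avgdeg R g; set lo := (mindeg g)%:R; set hi := (maxdeg g)%:R.
have deg_in v : lo <= ((deg g v)%:R : R) <= hi.
  by rewrite !ler_nat mindeg_le maxdeg_ge.
have avg_sum (c : R) : \sum_(v : 'I_n) c = c * n%:R.
  by rewrite sumr_const card_ord mulr_natr.
have d_in : lo <= d <= hi.
  apply/andP; split; rewrite -(ler_pM2r n_gt0R) -sum_deg -avg_sum ler_sum // => v _;
    by have /andP[] := deg_in v.
rewrite mulrC -avg_sum; apply: ler_sum => v _.
have dev : `|(deg g v)%:R - d| <= hi - lo.
  by move: (deg_in v) d_in => /andP[l1 l2] /andP[l3 l4]; rewrite ler_norml; lra.
by rewrite -real_normK ?num_real // !expr2 ler_pM.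
Qed.

End GraphCounting.

Lemma exceptional_index (R : realDomainType) n (s : seq R) (mu : 'I_n -> R) (lam : R) :
  (0 < n)%N -> perm_eq s [seq mu k | k <- enum 'I_n] ->
  (forall i, (0 < i < n)%N -> `|s`_i| <= lam) ->
  exists k0 : 'I_n, forall k, k != k0 -> `|mu k| <= lam.
Proof.
move=> n_gt0 s_mu s_small; pose big (x : R) := lam < `|x|.
have size_s : size s = n by rewrite (perm_size s_mu) size_map size_enum_ord.
have count_s : (count big s <= 1)%N.
  case: s s_mu s_small size_s => [//|x s'] _ s_small size_s /=.
  suff -> : count big s' = 0%N by case: (big x).
  apply/eqP; rewrite -leqn0 leqNgt -has_count; apply/hasPn => y ys'.
  rewrite /big -leNgt -(nth_index 0 ys').
  by apply: (s_small (index y s').+1); rewrite /= -size_s ltnS index_mem.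
have count_mu : (count big [seq mu k | k <- enum 'I_n] <= 1)%N by rewrite -(permP s_mu).
case: (pickP (fun k => big (mu k))) => [k0 big_k0 | none]; last first.
  exists (Ordinal n_gt0) => k _; rewrite leNgt; apply/negP => big_k.
  by have := none k; rewrite /= /big big_k.
exists k0 => k kk0; rewrite leNgt; apply/negP => big_k.
suff : (2 <= count big [seq mu k | k <- enum 'I_n])%N by case: (count _ _) count_mu => [|[|]].
rewrite count_map -size_filter (_ : 2%N = size [:: k; k0]) //.
apply: uniq_leq_size; first by rewrite /= inE kk0.
by move=> j; rewrite !inE => /orP[] /eqP ->; rewrite mem_filter mem_enum andbT.
Qed.

Lemma expander_mixing_eigenbasis (R : realType) n (g : rel 'I_n) (P : 'M[R[i]]_n)
    (mu : 'I_n -> R) (k0 : 'I_n) (lam Rc : R) :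
  (forall i j, \sum_k (P k i)^* * P k j = (i == j)%:R) ->
  (forall i j, (adjmx R g i j)%:C = \sum_k (P k i)^* * (mu k)%:C * P k j) ->
  (forall k j, \sum_i P k i * (adjmx R g i j)%:C = (mu k)%:C * P k j) ->
  (forall k, k != k0 -> `|mu k| <= lam) ->
  0 <= lam -> 0 < Rc -> (maxdeg g)%:R - (mindeg g)%:R <= Rc * lam ->
  0 < avgdeg R g -> 2 * lam <= avgdeg R g -> 4 * Rc * lam <= avgdeg R g ->
  forall U W : {set 'I_n},
    `| (edges_between g U W)%:R - avgdeg R g / n%:R * #|U|%:R * #|W|%:R |
    <= (10 * Rc + 1) * lam * Num.sqrt (#|U|%:R * #|W|%:R).
Proof.
move=> orth spec eig mu_small lam0 Rc0 spread d_gt0 dlam dRc U W.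
set A := adjmx R g; set d := avgdeg R g.
pose ind (S : {set 'I_n}) i : R := (i \in S)%:R.
set a := ecoord P (ind U); set b := ecoord P (ind W); set c := ecoord P (fun=> 1).
have aX : \sum_k normc (a k) ^+ 2 = Num.sqrt #|U|%:R ^+ 2.
  by rewrite sum_sqr_normc_ecoord // sqr_sqrtr ?sum_sqr_indicator.
have bY : \sum_k normc (b k) ^+ 2 = Num.sqrt #|W|%:R ^+ 2.
  by rewrite sum_sqr_normc_ecoord // sqr_sqrtr ?sum_sqr_indicator.
have cN : \sum_k normc (c k) ^+ 2 = n%:R.
  rewrite sum_sqr_normc_ecoord //; under eq_bigr do rewrite expr1n.
  by rewrite sumr_const card_ord.
have dev : \sum_k (mu k - d) ^+ 2 * normc (c k) ^+ 2 <= n%:R * (Rc * lam) ^+ 2.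
  rewrite (sum_sqr_ecoord_shift orth eig).
  have -> : \sum_i (\sum_j A i j * 1 - d * 1) ^+ 2 = \sum_v ((deg g v)%:R - d) ^+ 2.
    by apply: eq_bigr => v _; rewrite mulr1 deg_adjmx; under eq_bigr do rewrite mulr1.
  apply: le_trans (sum_sqr_deg_sub_avgdeg_le R g) _.
  rewrite ler_wpM2l // ler_pXn2r ?nnegrE ?subr_ge0 ?ler_nat ?mindeg_le_maxdeg //.
  exact: mulr_ge0 (ltW Rc0) lam0.
have e_form : ((edges_between g U W)%:R)%:C = \sum_k (mu k)%:C * a k * (b k)^*.
  by rewrite (ecoord_form spec) edges_between_adjmx.
have U_dot : (#|U|%:R)%:C = \sum_k a k * (c k)^*.
  by rewrite ecoord_dot // card_indicator; under [in RHS]eq_bigr do rewrite mulr1.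
have W_dot : (#|W|%:R)%:C = \sum_k c k * (b k)^*.
  by rewrite ecoord_dot // card_indicator; under [in RHS]eq_bigr do rewrite mul1r.
have -> : `|(edges_between g U W)%:R - d / n%:R * #|U|%:R * #|W|%:R|
    = normc (((edges_between g U W)%:R)%:C - (d / n%:R)%:C * (#|U|%:R)%:C * (#|W|%:R)%:C).
  by rewrite -!rmorphM -rmorphB normc_real_complex.
rewrite sqrtrM // mulrA e_form U_dot W_dot.
exact: coordinate_discrepancy_le mu_small aX bY cN dev.
Qed.

Lemma expander_mixing (R : realType) n (g : rel 'I_n) (s : seq R) (lam Rc : R) :
  simple_graph g -> adj_spectrum g s -> (forall i, (0 < i < n)%N -> `|s`_i| <= lam) ->
  0 <= lam -> 0 < Rc -> (maxdeg g)%:R - (mindeg g)%:R <= Rc * lam ->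
  0 < avgdeg R g -> 2 * lam <= avgdeg R g -> 4 * Rc * lam <= avgdeg R g ->
  forall U W : {set 'I_n},
    `| (edges_between g U W)%:R - avgdeg R g / n%:R * #|U|%:R * #|W|%:R |
    <= (10 * Rc + 1) * lam * Num.sqrt (#|U|%:R * #|W|%:R).
Proof.
move=> [g_sym _] [_ charA] s_small lam0 Rc0 spread d_gt0.
have n_gt0 : (0 < n)%N.
  rewrite lt0n; apply: contraTneq d_gt0 => n0.
  by rewrite /avgdeg (_ : n%:R = 0) ?n0 // invr0 mulr0 ltxx.
have AT : (adjmx R g)^T = adjmx R g by apply/matrixP => i j; rewrite !mxE g_sym.
have [P [mu [orth spec eig charP]]] := real_symmetric_spectral AT.
have [k0 mu_small] : exists k0 : 'I_n, forall k, k != k0 -> `|mu k| <= lam.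
  apply: exceptional_index n_gt0 _ s_small; apply: prod_XsubC_eq.
  by rewrite -charA charP big_map big_enum.
exact: (expander_mixing_eigenbasis orth spec eig mu_small).
Qed.

Lemma edges_between_avgdeg0 (R : realType) n (g : rel 'I_n) (U W : {set 'I_n}) :
  avgdeg R g = 0 -> edges_between g U W = 0%N.
Proof.
move=> d0; apply/eqP; rewrite -(eqr_nat R) eq_le ler0n andbT.
by rewrite (le_trans (edges_between_le_sum_deg R g U W)) // sum_deg d0 mul0r.
Qed.

Theorem mainTheorem7 (R : realType) (G : forall n : nat, rel 'I_n)
    (lam : nat -> R) (Rc : R) :
  (forall n, simple_graph (G n)) ->
  (forall n, exists s : seq R, adj_spectrum (G n) s /\
     forall i : nat, (0 < i < n)%N -> `|s`_i| <= lam n) ->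
  0 < Rc ->
  (forall n, (maxdeg (G n))%:R - (mindeg (G n))%:R <= Rc * lam n) ->
  (lam n / avgdeg R (G n)) @[n --> \oo] --> (0 : R) ->
  exists N : nat, forall n : nat, (N <= n)%N ->
    forall U W : {set 'I_n},
      `| (edges_between (G n) U W)%:R
         - avgdeg R (G n) / n%:R * #|U|%:R * #|W|%:R |
      <= (10 * Rc + 1) * lam n * Num.sqrt (#|U|%:R * #|W|%:R).
Proof.
move=> simple spectrum Rc_gt0 spread ratio_cvg0.
have e_gt0 : 0 < (4 * Rc + 2)^-1 :> R by rewrite invr_gt0; lra.
have /cvgrPdist_lt/(_ _ e_gt0)[N _ ratio_small] := ratio_cvg0.
exists N => n Nn U W; set d := avgdeg R (G n).
have lam_ge0 : 0 <= lam n.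
  rewrite -(pmulr_rge0 _ Rc_gt0); apply: le_trans (spread n).
  by rewrite subr_ge0 ler_nat mindeg_le_maxdeg.
have d_ge0 : 0 <= d by rewrite divr_ge0.
have [d0|d_neq0] := eqVneq d 0.
  rewrite (edges_between_avgdeg0 U W d0) d0 !mul0r subr0 normr0.
  by rewrite mulr_ge0 ?sqrtr_ge0 // mulr_ge0 //; lra.
have d_gt0 : 0 < d by rewrite lt_def d_neq0.
have [s [s_spec s_small]] := spectrum n.
have lam_small : (4 * Rc + 2) * lam n < d.
  rewrite -ltr_pdivlMl; last by lra.
  have := ratio_small n Nn; rewrite sub0r normrN ger0_norm ?divr_ge0 //.
  by rewrite ltr_pdivrMr.
have Rclam_ge0 : 0 <= Rc * lam n := mulr_ge0 (ltW Rc_gt0) lam_ge0.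
apply: (expander_mixing (simple n) s_spec s_small lam_ge0 Rc_gt0 (spread n) d_gt0);
  rewrite -/d; lra.
Qed.
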